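(* Let $M^*\in[0,1]^{n_1\times n_2}$ have non-decreasing columns (i.e. $M^*_{i,j}\le M^*_{i+1,j}$), let $N>0$, $\zeta\ge0$, let $B$ be a nonempty subset of $[n_2]$ and \[ \eta_B=16(\zeta+1)\Big(\sqrt{\frac{|B|n_1n_2}{N}\log(n_1n_2)}+\frac{n_1n_2}{N}\log(n_1n_2)\Big). \] Suppose $\widehat\pi$ is a topological sort of a directed graph $G$ on $[n_1]$ in which an edge $u\to v$ is present whenever $\sum_{\ell\in B}M^*_{v,\ell}-\sum_{\ell\in B}M^*_{u,\ell}>2\eta_B$. Then for all $i\in[n_1]$, \[ \sum_{j\in B}|M^*_{\widehat\pi(i),j}-M^*_{i,j}|\le96(\zeta+1)\sqrt{\frac{n_1n_2}{N}|B|\log(n_1n_2)}. \]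
   Context: A permutation $\pi$ of $[n_1]$ is a topological sort of a directed graph $G$ on $[n_1]$ if $\pi(u)<\pi(v)$ for every directed edge $u\to v$. Logarithms natural. *)

From HB Require Import structures.
From mathcomp Require Import all_boot all_order all_algebra all_fingroup.
From mathcomp Require Import reals exp.
Set Implicit Arguments. Unset Strict Implicit. Unset Printing Implicit Defensive.
Import Order.TTheory GRing.Theory Num.Theory.
Local Open Scope ring_scope.

Definition eta_B (R : realType) (n1 n2 : nat) (N zeta : R) (b : nat) : R :=
  16 * (zeta + 1) *
  (Num.sqrt (b%:R * (n1 * n2)%:R / N * ln (n1 * n2)%:R)
   + (n1 * n2)%:R / N * ln (n1 * n2)%:R).

Definition is_topological_sort (n : nat) (G : rel 'I_n) (pi : {perm 'I_n}) : Prop :=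
  forall u v : 'I_n, G u v -> (pi u < pi v)%N.

From HB Require Import structures.
From mathcomp Require Import all_boot all_order all_algebra all_fingroup.
From mathcomp Require Import reals exp.
From mathcomp Require Import ring lra.
Import Order.TTheory GRing.Theory Num.Theory.
Local Open Scope ring_scope.

(* Write k = pi i and S u for the sum of row u over B.  Monotone columns make
   all differences M k j - M i j of one sign, so the left-hand side is
   |S k - S i|.  If, say, i <= k and S k - S i > 2 eta_B, then S u - S i > 2 eta_B
   for every u >= k, so every such u receives an edge from i and pi u > k: pi
   would map {u | u >= k} injectively into the smaller set {u | u > k}.  Hence
   the left-hand side is at most 2 eta_B, and trivially at most |B|; the
   minimum of these two bounds is at most the right-hand side. *)

Lemma ord_homo_leq (d : Order.disp_t) (T : porderType d) (n : nat) (f : 'I_n -> T) :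
  (forall i i' : 'I_n, val i' = (val i).+1 -> (f i <= f i')%O) ->
  {homo f : u v / (u <= v)%N >-> (u <= v)%O}.
Proof.
move=> f_step u v uv.
pose g m := f (insubd u m).
have g_homo : {in [pred m | (m < n)%N] &, {homo g : a b / (a <= b)%N >-> (a <= b)%O}}.
  apply: homo_leq_in => [x|y x z|a b c aD bD /andP[_ cb]|a aD a1D].
  - exact: lexx.
  - exact: le_trans.
  - by rewrite inE (ltn_trans cb).
  - by rewrite !inE in aD a1D; apply: f_step; rewrite /= !val_insubd aD a1D.
by have := g_homo u v (ltn_ord u) (ltn_ord v) uv; rewrite /g !valKd.
Qed.

Lemma perm_not_into_proper {T : finType} (p : {perm T}) {A : {set T}} {x : T} :
  x \in A -> ~ {in A, forall u, p u \in A :\ x}.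
Proof.
move=> xA pA; have /subset_leq_card : p @: A \subset A :\ x.
  by apply/subsetP => _ /imsetP[u uA ->]; exact: pA.
by rewrite card_imset ?(cardsD1 x A) ?xA ?ltnn //; exact: perm_inj.
Qed.

Lemma topological_sort_displacement {R : realDomainType} {n : nat} {S : 'I_n -> R}
    {c : R} {G : rel 'I_n} {p : {perm 'I_n}} :
  {homo S : u v / (u <= v)%N >-> u <= v} ->
  (forall u v, S v - S u > c -> G u v) ->
  is_topological_sort G p ->
  forall i, `|S (p i) - S i| <= c.
Proof.
move=> S_homo S_edge p_top i; set k := p i.
have [ik | ki] := leqP i k.
  rewrite ger0_norm ?subr_ge0 ?S_homo // leNgt; apply/negP => gap.
  have kA : k \in [set u : 'I_n | (k <= u)%N] by rewrite inE.
  apply: (perm_not_into_proper p kA) => u.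
  rewrite !inE => ku.
  have /p_top : G i u by apply/S_edge/(lt_le_trans gap); rewrite lerD2r S_homo.
  by rewrite -/k -val_eqE eq_sym ltn_neqAle.
rewrite distrC ger0_norm ?subr_ge0 ?S_homo ?(ltnW ki) // leNgt; apply/negP => gap.
have kA : k \in [set u : 'I_n | (u <= k)%N] by rewrite inE.
apply: (perm_not_into_proper p kA) => u.
rewrite !inE => uk.
have /p_top : G u i by apply/S_edge/(lt_le_trans gap); rewrite lerD2l lerN2 S_homo.
by rewrite -/k -val_eqE ltn_neqAle.
Qed.

Section MonotoneColumns.

Context {R : realDomainType} {m n : nat} {M : 'M[R]_(m, n)}.
Hypothesis M_col_step : forall (i i' : 'I_m) j, val i' = (val i).+1 -> M i j <= M i' j.

Lemma col_homo (j : 'I_n) : {homo M^~ j : u v / (u <= v)%N >-> u <= v}.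
Proof. by apply: ord_homo_leq => i i'; exact: M_col_step. Qed.

Lemma row_sum_homo (B : {pred 'I_n}) :
  {homo (fun i => \sum_(j in B) M i j) : u v / (u <= v)%N >-> u <= v}.
Proof. by move=> u v uv; apply: ler_sum => j _; exact: col_homo. Qed.

Lemma sum_dist_rows (B : {pred 'I_n}) (u v : 'I_m) :
  \sum_(j in B) `|M v j - M u j| = `|\sum_(j in B) M v j - \sum_(j in B) M u j|.
Proof.
wlog uv : u v / (u <= v)%N.
  move=> dist_rows; have [|/ltnW vu] := leqP u v; first exact: dist_rows.
  by rewrite distrC -dist_rows //; apply: eq_bigr => j _; rewrite distrC.
rewrite ger0_norm ?subr_ge0 ?row_sum_homo // -sumrB.
by apply: eq_bigr => j _; rewrite ger0_norm // subr_ge0 col_homo.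
Qed.

End MonotoneColumns.

(* If Y <= b then Y <= sqrt (b Y); otherwise b <= sqrt (b Y). *)
Lemma min_linear_sqrt_le (R : rcfType) (b Y c D : R) :
  0 <= b -> 0 <= Y -> 1 <= c ->
  D <= b -> D <= 2 * (16 * c * (Num.sqrt (b * Y) + Y)) ->
  D <= 96 * c * Num.sqrt (b * Y).
Proof.
move=> b_ge0 Y_ge0 c_ge1 D_le_b D_le_eta.
have s_ge0 := sqrtr_ge0 (b * Y).
have sqr_s : Num.sqrt (b * Y) ^+ 2 = b * Y by rewrite sqr_sqrtr ?mulr_ge0.
have [Y_le_b | b_lt_Y] := lerP Y b.
  have : Y <= Num.sqrt (b * Y).
    by rewrite -(ler_pXn2r (n := 2)) ?nnegrE // sqr_s expr2 ler_wpM2r.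
  nra.
have : b <= Num.sqrt (b * Y).
  by rewrite -(ler_pXn2r (n := 2)) ?nnegrE // sqr_s expr2 ler_wpM2l // ltW.
nra.
Qed.

Theorem lemma10 (R : realType) (n1 n2 : nat) (M : 'M[R]_(n1, n2)) (N zeta : R)
  (B : {set 'I_n2}) (G : rel 'I_n1) (pi : {perm 'I_n1}) :
  (forall i j, 0 <= M i j <= 1) ->
  (forall (i i' : 'I_n1) (j : 'I_n2), val i' = (val i).+1 -> M i j <= M i' j) ->
  0 < N -> 0 <= zeta -> B != set0 ->
  (forall u v : 'I_n1,
      \sum_(l in B) M v l - \sum_(l in B) M u l > 2 * eta_B n1 n2 N zeta #|B| ->
      G u v) ->
  is_topological_sort G pi ->
  forall i : 'I_n1,
    \sum_(j in B) `|M (pi i) j - M i j|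
      <= 96 * (zeta + 1) *
         Num.sqrt ((n1 * n2)%:R / N * #|B|%:R * ln (n1 * n2)%:R).
Proof.
move=> M01 M_col_step N_gt0 zeta_ge0 B_neq0 G_edges pi_top i.
set Y := (n1 * n2)%:R / N * ln (n1 * n2)%:R.
have Y_ge0 : 0 <= Y.
  have [j _] := set0Pn _ B_neq0.
  have n1n2_gt0 : (0 < n1 * n2)%N.
    by rewrite muln_gt0 (leq_ltn_trans _ (ltn_ord i)) ?(leq_ltn_trans _ (ltn_ord j)).
  by rewrite mulr_ge0 ?divr_ge0 ?(ltW N_gt0) // ln_ge0 // ler1n.
have D_le_card : \sum_(j in B) `|M (pi i) j - M i j| <= #|B|%:R.
  rewrite -sumr_const; apply: ler_sum => j _.
  have /andP[? ?] := M01 i j; have /andP[? ?] := M01 (pi i) j.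
  by rewrite ler_norml; apply/andP; split; lra.
have D_le_eta : \sum_(j in B) `|M (pi i) j - M i j| <= 2 * eta_B n1 n2 N zeta #|B|.
  rewrite sum_dist_rows //.
  exact: (topological_sort_displacement (row_sum_homo M_col_step B) G_edges pi_top).
rewrite (_ : _ * #|B|%:R * _ = #|B|%:R * Y); last by rewrite /Y; ring.
apply: min_linear_sqrt_le => //; first lra.
by move: D_le_eta; rewrite /eta_B (_ : _ * ln _ = #|B|%:R * Y) // /Y; ring.
Qed.
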